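(* Let $H=(V,E)$ be a graph. (1) Let $\alpha=(\alpha(x))_{x\in V}$ be integers with $\alpha(x)\ge 2$ and let $G$ be $\alpha$-suspended over $H$. If $H$ has a Hamiltonian path, then $G$ has a Hamiltonian path. (2) Let $\ell\ge1$ and let $G$ be $\ell$-suspended over $H$. If $H$ has a Hamiltonian cycle of even length, then $G$ has a Hamiltonian cycle of even length.
   Context: $G$ is $\alpha$-suspended over $H$ if $G$ is the graph on vertex set $\{(x,i): x\in V, 0\le i\le\alpha(x)\}$ which is the union of the paths $((x,0),(x,1),\dots,(x,\alpha(x)))$ for $x\in V$ and the edges $\{(x,0),(y,0)\}$ and $\{(x,\alpha(x)),(y,\alpha(y))\}$ for all $\{x,y\}\in E$. For $\ell\ge1$, $P_\ell$ is the path on $0,\dots,\ell$ and $H\times P_\ell$ the Cartesian product (vertex set $V\times\{0,\dots,\ell\}$, with $(x,i)\sim(y,j)$ iff ($\{x,y\}\in E$ and $i=j$) or ($x=y$ and $|i-j|=1$)); $G$ is $\ell$-suspended over $H$ if $G$ is a spanning subgraph of $H\times P_\ell$ containing all edges $\{(x,i),(x,i+1)\}$ and all edges $\{(x,0),(y,0)\}$, $\{(x,\ell),(y,\ell)\}$ for $\{x,y\}\in E$. *)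

From mathcomp Require Import all_boot.
Unset Printing Implicit Defensive.

Definition simple_graph {V : finType} (e : rel V) : Prop :=
  symmetric e /\ irreflexive e.

Definition hamiltonian_path {T : finType} (e : rel T) : Prop :=
  exists (x : T) (s : seq T),
    [/\ uniq (x :: s), forall v : T, v \in x :: s & path e x s].

Definition even_hamiltonian_cycle {T : finType} (e : rel T) : Prop :=
  exists s : seq T,
    [/\ uniq s, 2 < size s, forall v : T, v \in s, cycle e s & ~~ odd (size s)].

Definition susp_vertex {V : finType} (alpha : V -> nat) : finType :=
  {x : V & 'I_(alpha x).+1}.

Definition susp_rel {V : finType} (e : rel V) (alpha : V -> nat)
  : rel (susp_vertex alpha) :=
  fun u v =>
    let x := tag u in let y := tag v in
    let i := val (tagged u) in let j := val (tagged v) in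
    [|| (x == y) && ((i.+1 == j) || (j.+1 == i)),
        e x y && (i == 0) && (j == 0)
      | e x y && (i == alpha x) && (j == alpha y)].

Definition prod_path_rel {V : finType} (e : rel V) (l : nat)
  : rel (V * 'I_l.+1) :=
  fun u v =>
    (e u.1 v.1 && (u.2 == v.2))
    || ((u.1 == v.1) && (((u.2 : nat).+1 == v.2) || ((v.2 : nat).+1 == u.2))).

Definition l_suspended {V : finType} (e : rel V) {l : nat}
  (g : rel (V * 'I_l.+1)) : Prop :=
  [/\ simple_graph g,
      (forall u v, g u v -> prod_path_rel e l u v),
      (forall (x : V) (i j : 'I_l.+1), (i : nat).+1 = j -> g (x, i) (x, j)) &
      (forall x y : V, e x y -> g (x, ord0) (y, ord0) /\ g (x, ord_max) (y, ord_max))].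

From mathcomp Require Import all_boot.

(* The Hamiltonian path or cycle x_1, ..., x_n of H is lifted by a boustrophedon
   ("snake"): run through the fibre of x_k, i.e. its column of copies from the
   bottom level to the top one, upwards for odd k and downwards for even k, and
   pass from one column to the next along an edge of the bottom or top copy of H.  For a cycle with n even, the last
   column is run downwards, so the snake ends at the bottom of x_n, adjacent to
   its start at the bottom of x_1; the closed cycle has n (l + 1) vertices, an even number. *)

Definition walk {T : Type} (r : rel T) (a b : T) (s : seq T) : Prop :=
  exists s', [/\ s = a :: s', path r a s' & last a s' = b].

Section Walk.
Local Set Implicit Arguments.
Local Unset Strict Implicit.
Variables (T : Type) (r : rel T).

Lemma walk1 a : walk r a a [:: a].
Proof. by exists [::]. Qed.

Lemma walk_cat a b c d s t :
  walk r a b s -> walk r c d t -> r b c -> walk r a d (s ++ t).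
Proof.
move=> [s' [-> ps <-]] [t' [-> pt <-]] rbc.
by exists (s' ++ c :: t'); rewrite cat_path /= ps rbc pt last_cat.
Qed.

Lemma walk_cons a b c s : r a b -> walk r b c s -> walk r a c (a :: s).
Proof. by move=> rab /(walk_cat (walk1 a)); apply. Qed.

Lemma walk_rev a b s : symmetric r -> walk r a b s -> walk r b a (rev s).
Proof.
move=> r_sym [s' [-> ps lst]].
have rev_s : rev (a :: s') = b :: rev (belast a s').
  by rewrite lastI rev_rcons lst.
exists (rev (belast a s')); split; first exact: rev_s.
  by rewrite -lst rev_path (eq_path (e' := r)) // => x y; rewrite r_sym.
by rewrite -(last_cons b b) -rev_s rev_cons last_rcons.
Qed.

Lemma walk_cycle a b s : walk r a b s -> r b a -> cycle r s.
Proof. by move=> [s' [-> ps <-]] rba; rewrite /= rcons_path ps rba. Qed.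

Lemma walk_map (U : Type) (r' : rel U) (f : T -> U) a b s :
  (forall x y, r x y -> r' (f x) (f y)) -> walk r a b s ->
  walk r' (f a) (f b) (map f s).
Proof.
move=> f_mono [s' [-> ps <-]]; exists (map f s'); rewrite last_map; split=> //.
by rewrite path_map; apply: sub_path ps => x y /f_mono.
Qed.

End Walk.

Lemma walk_iota m n : walk (fun i j => i.+1 == j) m (m + n) (iota m n.+1).
Proof.
elim: n m => [|n IHn] m; first by rewrite addn0; apply: walk1.
by rewrite addnS -addSn; apply: walk_cons _ (IHn m.+1).
Qed.

Lemma walk_enum_ord n :
  walk (fun i j : 'I_n.+1 => i.+1 == j) ord0 ord_max (enum 'I_n.+1).
Proof.
have [s' [iota_s' ps lst]] := walk_iota 0 n.
move: iota_s'; rewrite -val_enum_ord enum_ordSl /= => -[map_s'].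
exists (map (lift ord0) (enum 'I_n)); split=> //.
  by move: ps; rewrite -map_s' -[0]/(val (@ord0 n)) path_map.
by apply: val_inj; rewrite /= -(last_map val) map_s' lst.
Qed.

Section Snake.
Local Set Implicit Arguments.
Local Unset Strict Implicit.
Variables (V T : finType) (e : rel V) (r : rel T).
Variables (proj : T -> V) (col : V -> seq T) (bot top : V -> T).
Hypothesis r_sym : symmetric r.
Hypothesis col_uniq : forall x, uniq (col x).
Hypothesis mem_col : forall x t, (t \in col x) = (proj t == x).
Hypothesis walk_col : forall x, walk r (bot x) (top x) (col x).
Hypothesis e_bot : forall x y, e x y -> r (bot x) (bot y).
Hypothesis e_top : forall x y, e x y -> r (top x) (top y).

Definition col_end b x := if b then bot x else top x.

Definition oriented_col b x := if b then col x else rev (col x).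

Fixpoint snake b xs :=
  if xs is x :: xs' then oriented_col b x ++ snake (~~ b) xs' else [::].

Lemma mem_oriented_col b x t : (t \in oriented_col b x) = (proj t == x).
Proof. by case: b; rewrite /oriented_col ?mem_rev mem_col. Qed.

Lemma mem_snake b xs t : (t \in snake b xs) = (proj t \in xs).
Proof.
by elim: xs b => //= x xs IHxs b; rewrite mem_cat IHxs mem_oriented_col in_cons.
Qed.

Lemma uniq_snake b xs : uniq xs -> uniq (snake b xs).
Proof.
elim: xs b => //= x xs IHxs b /andP[x_notin_xs uniq_xs].
rewrite cat_uniq IHxs // andbT; apply/andP; split.
  by case: b; rewrite /oriented_col ?rev_uniq col_uniq.
apply/hasPn => t; rewrite mem_snake mem_oriented_col.
by apply: contraL => /eqP->; rewrite x_notin_xs.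
Qed.

Lemma size_snake b xs k :
  (forall x, size (col x) = k) -> size (snake b xs) = size xs * k.
Proof.
move=> col_k; elim: xs b => //= x xs IHxs b.
by rewrite size_cat IHxs mulSn; case: b; rewrite /oriented_col ?size_rev col_k.
Qed.

Lemma walk_oriented_col b x :
  walk r (col_end b x) (col_end (~~ b) x) (oriented_col b x).
Proof. by case: b; [exact: walk_col | exact: walk_rev r_sym (walk_col x)]. Qed.

Lemma col_end_edge b x y : e x y -> r (col_end b x) (col_end b y).
Proof. by case: b; [apply: e_bot | apply: e_top]. Qed.

Lemma walk_snake b x xs : path e x xs ->
  walk r (col_end b x) (col_end (~~ b (+) odd (size xs)) (last x xs))
    (snake b (x :: xs)).
Proof.
elim: xs b x => [|y xs IHxs] b x.
  by move=> _; rewrite /= addbF cats0; apply: walk_oriented_col.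
move=> /andP[exy /(IHxs (~~ b))].
rewrite negbK [odd (size (_ :: _))]/= addbN addNb negbK => walk_xs.
exact: walk_cat (walk_oriented_col b x) walk_xs (col_end_edge _ exy).
Qed.

Lemma snake_hamiltonian_path : hamiltonian_path e -> hamiltonian_path r.
Proof.
move=> [x [xs [uniq_xs mem_xs path_xs]]].
have [s [snake_s path_s _]] := walk_snake true path_xs.
exists (bot x), s; rewrite -snake_s; split.
- exact: uniq_snake uniq_xs.
- by move=> t; rewrite mem_snake mem_xs.
- exact: path_s.
Qed.

Lemma snake_even_hamiltonian_cycle k :
  (forall x, size (col x) = k) ->
  even_hamiltonian_cycle e -> even_hamiltonian_cycle r.
Proof.
move=> col_k [[|x xs] [uniq_xs size_xs mem_xs cycle_xs even_xs]] //.
move: cycle_xs; rewrite /= rcons_path => /andP[path_xs e_last].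
have k_gt0 : 0 < k.
  by have [s [col_x _ _]] := walk_col x; rewrite -(col_k x) col_x.
have size_s := size_snake true (x :: xs) col_k.
exists (snake true (x :: xs)); split.
- exact: uniq_snake uniq_xs.
- by rewrite size_s (leq_trans size_xs) // leq_pmulr.
- by move=> t; rewrite mem_snake mem_xs.
- apply: walk_cycle (walk_snake true path_xs) _.
  by move: even_xs; rewrite /= negbK => ->; exact: e_bot e_last.
- by rewrite size_s oddM (negbTE even_xs).
Qed.

End Snake.

Lemma susp_rel_sym (V : finType) (e : rel V) (alpha : V -> nat) :
  symmetric e -> symmetric (susp_rel e alpha).
Proof.
move=> e_sym u v; rewrite /susp_rel (eq_sym (tag v)) e_sym.
by congr [|| _ && _, _ | _]; rewrite (orbC, andbAC).
Qed.

Lemma susp_hamiltonian_path (V : finType) (e : rel V) (alpha : V -> nat) :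
  symmetric e -> hamiltonian_path e -> hamiltonian_path (susp_rel e alpha).
Proof.
move=> e_sym.
pose vtx x (i : 'I_(alpha x).+1) : susp_vertex alpha := Tagged _ i.
pose col x := map (vtx x) (enum 'I_(alpha x).+1).
apply: (snake_hamiltonian_path (proj := tag) (col := col)
  (bot := vtx^~ ord0) (top := vtx^~ ord_max)).
- exact: susp_rel_sym.
- by move=> x; rewrite map_inj_uniq ?enum_uniq // => i j; apply: eq_from_Tagged.
- move=> x [y j] /=; apply/idP/eqP => [/mapP[i _ /(congr1 tag)] // | <-].
  by apply/mapP; exists j; rewrite ?mem_enum.
- move=> x; apply: walk_map (walk_enum_ord _) => i j /= i_j.
  by rewrite /susp_rel /= eqxx i_j.
- by move=> x y exy; rewrite /susp_rel /= exy !eqxx !orbT.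
- by move=> x y exy; rewrite /susp_rel /= exy !eqxx !orbT.
Qed.

Lemma l_suspended_even_hamiltonian_cycle (V : finType) (e : rel V) (l : nat)
    (g : rel (V * 'I_l.+1)) :
  l_suspended e g -> even_hamiltonian_cycle e -> even_hamiltonian_cycle g.
Proof.
move=> [[g_sym _] _ g_vert g_end].
pose col (x : V) := map (pair x) (enum 'I_l.+1).
have col_size x : size (col x) = l.+1 by rewrite size_map size_enum_ord.
apply: (snake_even_hamiltonian_cycle (proj := fst) (col := col)
  (bot := pair^~ ord0) (top := pair^~ ord_max) g_sym _ _ _ _ _ col_size).
- by move=> x; rewrite map_inj_uniq ?enum_uniq // => i j [].
- move=> x [y j] /=; apply/idP/eqP => [/mapP[i _ [->]] // | <-].
  by apply/mapP; exists j; rewrite ?mem_enum.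
- move=> x; apply: walk_map (walk_enum_ord _) => i j /eqP.
  exact: g_vert.
- by move=> x y /g_end[].
- by move=> x y /g_end[].
Qed.

Theorem lemma3p3 (V : finType) (e : rel V) (He : simple_graph e) :
  (forall alpha : V -> nat, (forall x, 2 <= alpha x) ->
     hamiltonian_path e -> hamiltonian_path (susp_rel e alpha)) /\
  (forall (l : nat) (g : rel (V * 'I_l.+1)), 1 <= l -> l_suspended e g ->
     even_hamiltonian_cycle e -> even_hamiltonian_cycle g).
Proof.
split=> [alpha _ | l g _].
- by apply: susp_hamiltonian_path; case: He.
- exact: l_suspended_even_hamiltonian_cycle.
Qed.
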